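(* Under the standing assumptions, if $J_g\neq\{0\}$ for every $g\in\mathcal G$, then the Galois map $\theta:H\mapsto R^{\beta_H}$, from the set of wide subgroupoids of $\mathcal G$ to the set of subalgebras of $R$ containing $R^\beta$, is injective.
   Context: All rings and algebras are associative and unital. A groupoid is a nonempty set $\mathcal G$ with a partially defined associative multiplication in which every $g$ has an inverse $g^{-1}$, a left identity $r(g)=gg^{-1}$ and a right identity $d(g)=g^{-1}g$; $gh$ is defined iff $d(g)=r(h)$; $\mathcal G_0$ is the set of identities. A subgroupoid is a nonempty subset closed under inverses and defined products; it is wide if it contains $\mathcal G_0$. Standing assumptions: $K$ commutative ring, $R$ a $K$-algebra, $\mathcal G$ a finite groupoid, $\beta=(\{E_g\},\{\beta_g\})$ a unital action of $\mathcal G$ on $R$: $E_g=E_{r(g)}$ is an ideal of $R$, unital with identity $1_g$ (so $1_{g^{-1}}=1_{d(g)}$), $\beta_g:E_{g^{-1}}\to E_g$ a $K$-algebra isomorphism, $\beta_e=\mathrm{id}_{E_e}$ for $e\in\mathcal G_0$, $\beta_g\beta_h(x)=\beta_{gh}(x)$ whenever $d(g)=r(h)$, $x\in E_{h^{-1}}$; $R=\bigoplus_{e\in\mathcal G_0}E_e$; and $R$ is a $\beta$-Galois extension of $R^\beta$: there exist $x_i,y_i\in R$ ($1\le i\le m$) with $\sum_i x_i\beta_g(y_i1_{g^{-1}})=1_g$ if $g\in\mathcal G_0$ and $=0$ otherwise. For a subgroupoid $H$, $R^{\beta_H}=\{r\in R:\beta_h(r1_{h^{-1}})=r1_h\ \forall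 h\in H\}$, and $R^\beta=R^{\beta_{\mathcal G}}$. For $g\in\mathcal G$, $J_g=\{r\in E_g: r\beta_g(x1_{g^{-1}})=xr\ \forall x\in R\}$. *)

From HB Require Import structures.
From mathcomp Require Import all_boot all_order all_algebra.
Set Implicit Arguments. Unset Strict Implicit. Unset Printing Implicit Defensive.
Import GRing.Theory.
Local Open Scope ring_scope.

(* ---------- Finite groupoids ----------
   A finite groupoid is a finite type G with a multiplication [mul], which is
   only meaningful (i.e. "defined") on pairs (g,h) with d g = r h, an inverse
   [inv], range [r] (r g = g g^{-1}) and domain [d] (d g = g^{-1} g). *)
Record is_groupoid (G : finType) (mul : G -> G -> G) (inv r d : G -> G) : Prop := {
  gpd_nonempty : (0 < #|G|)%N;
  gpd_r_inv : forall g, r (inv g) = d g;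
  gpd_d_inv : forall g, d (inv g) = r g;
  gpd_mulV : forall g, mul g (inv g) = r g;
  gpd_mulVg : forall g, mul (inv g) g = d g;
  gpd_rr : forall g, r (r g) = r g;
  gpd_dr : forall g, d (r g) = r g;
  gpd_rd : forall g, r (d g) = d g;
  gpd_dd : forall g, d (d g) = d g;
  gpd_mul1g : forall g, mul (r g) g = g;
  gpd_mulg1 : forall g, mul g (d g) = g;
  gpd_r_mul : forall g h, d g = r h -> r (mul g h) = r g;
  gpd_d_mul : forall g h, d g = r h -> d (mul g h) = d h;
  gpd_assoc : forall g h k, d g = r h -> d h = r k ->
                mul (mul g h) k = mul g (mul h k) }.

Definition G0 (G : finType) (r : G -> G) : {set G} := [set e | r e == e].

Definition is_subgroupoid (G : finType) (mul : G -> G -> G) (inv r d : G -> G)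
  (H : {set G}) : Prop :=
  [/\ H != set0,
      forall h, h \in H -> inv h \in H &
      forall g h, g \in H -> h \in H -> d g = r h -> mul g h \in H].

Definition is_wide_subgroupoid (G : finType) (mul : G -> G -> G) (inv r d : G -> G)
  (H : {set G}) : Prop :=
  is_subgroupoid mul inv r d H /\ G0 r \subset H.

(* ---------- Unital actions ----------
   E g is an ideal of R (as a predicate), unital with identity [one g];
   beta g : E (inv g) -> E g is a K-algebra isomorphism (represented by a
   total function, only its restriction to E (inv g) matters). *)
Record unital_action (K : comPzRingType) (R : algType K) (G : finType)
  (mul : G -> G -> G) (inv r d : G -> G)
  (E : G -> R -> Prop) (one : G -> R) (beta : G -> R -> R) : Prop := {
  E_0 : forall g, E g 0;
  E_sub : forall g x y, E g x -> E g y -> E g (x - y);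
  E_mull : forall g a x, E g x -> E g (a * x);
  E_mulr : forall g a x, E g x -> E g (x * a);
  E_r : forall g x, E g x <-> E (r g) x;
  one_in : forall g, E g (one g);
  one_l : forall g x, E g x -> one g * x = x;
  one_r : forall g x, E g x -> x * one g = x;
  beta_in : forall g x, E (inv g) x -> E g (beta g x);
  beta_add : forall g x y, E (inv g) x -> E (inv g) y ->
               beta g (x + y) = beta g x + beta g y;
  beta_mul : forall g x y, E (inv g) x -> E (inv g) y ->
               beta g (x * y) = beta g x * beta g y;
  beta_scale : forall g (k : K) x, E (inv g) x -> beta g (k *: x) = k *: beta g x;
  beta_inj : forall g x y, E (inv g) x -> E (inv g) y -> beta g x = beta g y -> x = y;
  beta_surj : forall g y, E g y -> exists2 x, E (inv g) x & beta g x = y;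
  beta_id : forall e x, e \in G0 r -> E e x -> beta e x = x;
  beta_comp : forall g h x, d g = r h -> E (inv h) x ->
                beta g (beta h x) = beta (mul g h) x }.

Definition direct_sum_decomp (K : comPzRingType) (R : algType K) (G : finType)
  (r : G -> G) (E : G -> R -> Prop) : Prop :=
  (forall x : R, exists f : G -> R,
      (forall e, e \in G0 r -> E e (f e)) /\ x = \sum_(e in G0 r) f e) /\
  (forall f : G -> R, (forall e, e \in G0 r -> E e (f e)) ->
      \sum_(e in G0 r) f e = 0 -> forall e, e \in G0 r -> f e = 0).

Definition galois_ext (K : comPzRingType) (R : algType K) (G : finType)
  (inv r : G -> G) (one : G -> R) (beta : G -> R -> R) : Prop :=
  exists (m : nat) (x y : 'I_m -> R), forall g : G,
    \sum_(i < m) x i * beta g (y i * one (inv g)) =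
      if g \in G0 r then one g else 0.

Definition fixed_by (K : comPzRingType) (R : algType K) (G : finType)
  (inv : G -> G) (one : G -> R) (beta : G -> R -> R) (H : {set G}) (a : R) : Prop :=
  forall h, h \in H -> beta h (a * one (inv h)) = a * one h.

Definition Jg (K : comPzRingType) (R : algType K) (G : finType)
  (inv : G -> G) (E : G -> R -> Prop) (one : G -> R) (beta : G -> R -> R)
  (g : G) (a : R) : Prop :=
  E g a /\ forall x : R, a * beta g (x * one (inv g)) = x * a.

From HB Require Import structures.
From mathcomp Require Import all_boot all_order all_algebra.
Set Implicit Arguments. Unset Strict Implicit. Unset Printing Implicit Defensive.
Import GRing.Theory.
Local Open Scope ring_scope.

(* For a subgroupoid H consider the trace t_H(z) = sum_(h in H) beta_h(z 1_{h^-1}).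
   Left translation by k in H permutes the arrows of H, which shows that
   t_H(z) is always fixed by H.  Now let H1, H2 be wide subgroupoids with the
   same fixed ring and g in H2 \ H1, and let (x_i, y_i) be a Galois coordinate
   system.  Since t_{H1}(y_i) is fixed by g,
     sum_i x_i beta_g(t(y_i) 1_{g^-1}) = sum_i x_i t(y_i) 1_g.
   Expanding with the Galois identity, the left side is a sum of 1_{gh} over
   those h in H1 with gh an identity; there are none because g is not in H1,
   so it vanishes.  The right side is a sum of 1_e over the identities e of
   H1, times 1_g, which equals 1_g since r(g) lies in H1 and the 1_e are
   orthogonal.  Hence 1_g = 0, so E_g = 0, contradicting J_g <> 0.
   The file first proves groupoid facts, then facts about unital actions,
   then the trace and Galois computations, and finally the theorem. *)

Section Groupoid.
Variables (G : finType) (mul : G -> G -> G) (inv r d : G -> G).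
Hypothesis HG : is_groupoid mul inv r d.

Lemma mulKg g h : d g = r h -> mul (inv g) (mul g h) = h.
Proof.
move=> dg; rewrite -(gpd_assoc HG) ?(gpd_d_inv HG) //.
by rewrite (gpd_mulVg HG) dg (gpd_mul1g HG).
Qed.

Lemma invK : involutive inv.
Proof.
move=> g; have := mulKg (gpd_d_inv HG g).
by rewrite (gpd_mulVg HG) -(gpd_r_inv HG) -(gpd_d_inv HG) (gpd_mulg1 HG).
Qed.

Lemma mul_id_inv g h : d g = r h -> r (mul g h) = mul g h -> h = inv g.
Proof.
move=> dg idgh; rewrite -(mulKg dg) -idgh (gpd_r_mul HG dg).
by rewrite -(gpd_d_inv HG) (gpd_mulg1 HG).
Qed.

(* Left translation by an arrow k of a subgroupoid H is a bijection from the
   arrows of H with range d(k) onto the arrows of H with range r(k). *)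
Lemma sum_left_translate (V : nmodType) (H : {set G}) (F : G -> V) k :
  is_subgroupoid mul inv r d H -> k \in H ->
  \sum_(h in H | d k == r h) F (mul k h) = \sum_(j in H | r j == r k) F j.
Proof.
move=> [_ Hinv Hmul] kH.
have dki : d (inv k) = r k by rewrite (gpd_d_inv HG).
rewrite [RHS](reindex_onto (mul k) (mul (inv k))) /=; last first.
  move=> j /andP [_ /eqP rj]; rewrite -(gpd_assoc HG) ?(gpd_r_inv HG) ?dki ?rj //.
  by rewrite (gpd_mulV HG) -rj (gpd_mul1g HG).
apply: eq_bigl => h; apply/idP/idP.
  move=> /andP [hH /eqP dk].
  by rewrite Hmul // (gpd_r_mul HG dk) mulKg // !eqxx.
move=> /andP [/andP [khH /eqP rkh] /eqP e].
have dk : d k = r h.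
  by rewrite -e (gpd_r_mul HG) ?(gpd_r_inv HG) // dki rkh.
by rewrite dk eqxx andbT -e Hmul ?Hinv ?dki ?rkh.
Qed.

End Groupoid.

Section UnitalAction.
Variables (K : comPzRingType) (R : algType K) (G : finType)
  (mul : G -> G -> G) (inv r d : G -> G)
  (E : G -> R -> Prop) (one : G -> R) (beta : G -> R -> R).
Hypothesis HG : is_groupoid mul inv r d.
Hypothesis HA : unital_action mul inv r d E one beta.
Hypothesis HD : direct_sum_decomp r E.

Lemma E_rE a b : r a = r b -> forall x, E a x <-> E b x.
Proof. move=> rab x; have := E_r HA a x; have := E_r HA b x; rewrite rab; tauto. Qed.

Lemma one_rE a b : r a = r b -> one a = one b.
Proof.
move=> rab.
have Eab : E a (one b) by apply/(E_rE rab)/(one_in HA).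
have Eba : E b (one a) by apply/(E_rE (esym rab))/(one_in HA).
by rewrite -[RHS](one_l HA Eab) (one_r HA Eba).
Qed.

Lemma E_add g x y : E g x -> E g y -> E g (x + y).
Proof.
move=> Ex Ey; have := E_sub HA Ex (E_sub HA (E_0 HA g) Ey).
by rewrite sub0r opprK.
Qed.

(* The units of distinct summands E_e, E_e' of R are orthogonal: p = 1_e 1_e'
   lies in both, and p + (-p) = 0 is a decomposition of 0, so p = 0. *)
Lemma one_orth e e' : e \in G0 r -> e' \in G0 r -> e != e' -> one e * one e' = 0.
Proof.
move=> eG0 e'G0 ne.
set p := one e * one e'.
have Ep : E e p by apply/(E_mulr HA)/(one_in HA).
have Ep' : E e' p by apply/(E_mull HA)/(one_in HA).
pose f x := if x == e then p else if x == e' then - p else 0.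
have Ef x : x \in G0 r -> E x (f x).
  move=> _; rewrite /f; case: (x =P e) => [->//|_]; case: (x =P e') => [->|_].
    by rewrite -sub0r; apply: (E_sub HA) => //; apply: (E_0 HA).
  exact: (E_0 HA).
have sum0 : \sum_(x in G0 r) f x = 0.
  rewrite (bigD1 e) //= (bigD1 e') /=; last by rewrite e'G0 eq_sym.
  rewrite big1; last by move=> x /andP [/andP [_ /negbTE xe] /negbTE xe']; rewrite /f xe xe'.
  by rewrite /f eqxx eq_sym (negbTE ne) eqxx addr0 subrr.
by have := proj2 HD f Ef sum0 e eG0; rewrite /f eqxx.
Qed.

Lemma mulr_one x h k : E h x -> x * one k = if r h == r k then x else 0.
Proof.
move=> Ex; case: eqP => rhk; first by apply/(one_r HA)/(E_rE rhk).
rewrite -(one_r HA Ex) -mulrA -(one_rE (gpd_rr HG h)) -(one_rE (gpd_rr HG k)).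
by rewrite one_orth ?mulr0 ?inE ?(gpd_rr HG) //; apply/eqP.
Qed.

Lemma beta0 k : beta k 0 = 0.
Proof.
have E0 := E_0 HA (inv k).
have := beta_add HA E0 E0; rewrite addr0.
by rewrite -{1}(addr0 (beta k 0)) => /addrI <-.
Qed.

Lemma beta_sum k (I : Type) (s : seq I) (P : pred I) (F : I -> R) :
  (forall i, P i -> E (inv k) (F i)) ->
  beta k (\sum_(i <- s | P i) F i) = \sum_(i <- s | P i) beta k (F i).
Proof.
move=> EF.
apply: (proj2 (big_rec2 (fun u v => E (inv k) u /\ beta k u = v) _ _)).
  by split; [apply: (E_0 HA) | apply: beta0].
move=> i u v Pi [Eu <-]; split; first exact: E_add (EF i Pi) Eu.
by rewrite (beta_add HA) //; apply: EF.
Qed.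

Lemma E_mul_oneV h z : E (inv h) (z * one (inv h)).
Proof. exact/(E_mull HA)/(one_in HA). Qed.

Lemma beta_twist k h z :
  beta k (beta h (z * one (inv h)) * one (inv k)) =
  if d k == r h then beta (mul k h) (z * one (inv (mul k h))) else 0.
Proof.
have Eb := beta_in HA (E_mul_oneV h z).
rewrite (mulr_one _ Eb) (gpd_r_inv HG) eq_sym.
case: eqP => [dk|_]; last exact: beta0.
rewrite (beta_comp HA dk (E_mul_oneV h z)) (@one_rE (inv h) (inv (mul k h))) //.
by rewrite !(gpd_r_inv HG) (gpd_d_mul HG).
Qed.

Definition trace (H : {set G}) (z : R) : R := \sum_(h in H) beta h (z * one (inv h)).

Lemma trace_twist (H : {set G}) z k :
  beta k (trace H z * one (inv k)) =
  \sum_(h in H | d k == r h) beta (mul k h) (z * one (inv (mul k h))).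
Proof.
rewrite /trace mulr_suml beta_sum; last by move=> h _; apply/(E_mull HA)/(one_in HA).
by rewrite big_mkcondr /=; apply: eq_bigr => h _; rewrite beta_twist.
Qed.

Lemma trace_one (H : {set G}) z k :
  trace H z * one k = \sum_(h in H | r h == r k) beta h (z * one (inv h)).
Proof.
rewrite /trace mulr_suml big_mkcondr /=.
by apply: eq_bigr => h _; rewrite (mulr_one _ (beta_in HA (E_mul_oneV h z))).
Qed.

Lemma trace_fixed (H : {set G}) z :
  is_subgroupoid mul inv r d H -> fixed_by inv one beta H (trace H z).
Proof.
move=> subH k kH; rewrite trace_twist trace_one.
exact: (sum_left_translate HG (fun j => beta j (z * one (inv j))) subH kH).
Qed.

Lemma one_neq0_of_J g a : Jg inv E one beta g a -> a != 0 -> one g != 0.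
Proof.
move=> [Ea _]; apply: contraNneq => og.
by rewrite -(one_l HA Ea) og mul0r.
Qed.

Section GaloisCoordinates.
Variables (m : nat) (x y : 'I_m -> R).
Hypothesis Hxy : forall g : G,
  \sum_(i < m) x i * beta g (y i * one (inv g)) = if g \in G0 r then one g else 0.

(* If g is outside the subgroupoid H, no composite g h with h in H is an
   identity, so the Galois identity makes the twisted trace vanish. *)
Lemma galois_twist_outside (H : {set G}) g :
  is_subgroupoid mul inv r d H -> g \notin H ->
  \sum_(i < m) x i * beta g (trace H (y i) * one (inv g)) = 0.
Proof.
move=> [_ Hinv _] gH.
under eq_bigr => i _ do rewrite trace_twist mulr_sumr.
rewrite exchange_big /=; apply: big1 => h /andP [hH /eqP dg].
rewrite Hxy inE; case: eqP => // idgh.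
by move: gH; rewrite -(invK HG g) -(mul_id_inv HG dg idgh) Hinv.
Qed.

Lemma galois_trace_one (H : {set G}) g :
  G0 r \subset H -> \sum_(i < m) x i * (trace H (y i) * one g) = one g.
Proof.
move=> wideH.
under eq_bigr => i _ do rewrite mulrA.
rewrite -mulr_suml /trace.
under eq_bigr => i _ do rewrite mulr_sumr.
rewrite exchange_big /=.
under eq_bigr => h _ do rewrite Hxy.
have rgG0 : r g \in G0 r by rewrite inE (gpd_rr HG).
rewrite mulr_suml (bigD1 (r g)) /=; last exact: (subsetP wideH).
rewrite rgG0 (one_rE (gpd_rr HG g)) (one_l HA (one_in HA g)) big1 ?addr0 //.
move=> h /andP [_ hrg]; case: ifP => [|_]; last by rewrite mul0r.
by rewrite inE => /eqP rh; rewrite (mulr_one _ (one_in HA h)) rh (negbTE hrg).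
Qed.

End GaloisCoordinates.

Lemma fixed_sub_antitone (H1 H2 : {set G}) :
  galois_ext inv r one beta ->
  (forall g : G, exists2 a : R, Jg inv E one beta g a & a != 0) ->
  is_wide_subgroupoid mul inv r d H1 ->
  (forall a : R, fixed_by inv one beta H1 a -> fixed_by inv one beta H2 a) ->
  H2 \subset H1.
Proof.
move=> [m [x [y Hxy]]] HJ [subH1 wideH1] fix12.
apply/subsetP => g gH2; apply/negPn/negP => gH1.
have [a Ja anz] := HJ g.
have [] := negP (one_neq0_of_J Ja anz).
apply/eqP; rewrite -(galois_trace_one Hxy g wideH1).
rewrite -[RHS](galois_twist_outside Hxy subH1 gH1).
by apply: eq_bigr => i _; rewrite (fix12 _ (trace_fixed _ subH1) g gH2).
Qed.

End UnitalAction.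

Theorem theorem3p3 (K : comPzRingType) (R : algType K) (G : finType)
  (mul : G -> G -> G) (inv r d : G -> G)
  (E : G -> R -> Prop) (one : G -> R) (beta : G -> R -> R) :
  is_groupoid mul inv r d ->
  unital_action mul inv r d E one beta ->
  direct_sum_decomp r E ->
  galois_ext inv r one beta ->
  (forall g : G, exists2 a : R, Jg inv E one beta g a & a != 0) ->
  forall H1 H2 : {set G},
    is_wide_subgroupoid mul inv r d H1 ->
    is_wide_subgroupoid mul inv r d H2 ->
    (forall a : R, fixed_by inv one beta H1 a <-> fixed_by inv one beta H2 a) ->
    H1 = H2.
Proof.
move=> HG HA HD Hgal HJ H1 H2 W1 W2 Hfix.
apply/eqP; rewrite eqEsubset.
have sub21 := fixed_sub_antitone HG HA HD Hgal HJ W1 (fun a => proj1 (Hfix a)).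
have sub12 := fixed_sub_antitone HG HA HD Hgal HJ W2 (fun a => proj2 (Hfix a)).
by rewrite sub12 sub21.
Qed.
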